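(* Let $\mathcal G$ be a shortest-path game in which $\mathrm{Val}^{\mathrm d}(v)\neq+\infty$ and $\overline{\mathrm{Val}}^{\mathrm m}(v)\neq+\infty$ for all vertices $v$. Let $\sigma_1$ be a fake-optimal NC-strategy of Min, $\sigma_2$ an attractor strategy of Min, $p\in(0,1)$, $\rho_p$ the memoryless strategy defined below, and $\tau$ a deterministic memoryless strategy of Max. Then every cycle of the Markov chain $\mathcal G^{\rho_p,\tau}$ (a cycle using only transitions of positive probability) with non-negative total weight contains at least one transition of probability $1-p$, i.e. a transition from a Min vertex $v$ to $\sigma_2(v)$ where $v$ lies in a strongly connected component of $(V,E)$ containing a negative-weight cycle and $\sigma_1(v)\neq\sigma_2(v)$.
   Context: A shortest-path game is $\mathcal G=(V_{\mathrm{Max}},V_{\mathrm{Min}},T,E,w)$ with finite $V=V_{\mathrm{Max}}\uplus V_{\mathrm{Min}}\uplus T$, edges $E\subseteq (V\setminus T)\times V$ with every non-target vertex having a successor, and integer weights $w\colon E\to\mathbb Z$. Plays from $v$ are finite paths ending at their first visit to $T$ (total payoff $\mathrm{TP}$ = sum of weights) or infinite paths avoiding $T$ ($\mathrm{TP}=+\infty$). Strategies of Min (resp. Max) map finite paths ending in $V_{\mathrm{Min}}$ (resp. $V_{\mathrm{Max}}$) to distributions on successors of the last vertex; deterministic = always Dirac, memoryless = depends only on the last vertex. For deterministic $\sigma,\tau$, $\mathrm{Val}^\sigma(v)=\sup_\tau\mathrm{TP}$ of the unique conforming play, $\mathrm{Val}^{\mathrm d}(v)=\inf_\sigma\mathrm{Val}^\sigma(v)$.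 For memoryless $\rho,\tau$, $\mathcal G^{\rho,\tau}$ denotes the induced Markov chain on $V$ (Min vertices move by $\rho$, Max vertices by $\tau$), with weights inherited from $\mathcal G$; $\overline{\mathrm{Val}}^{\mathrm m}(v)=\inf_\rho\sup_\tau\mathbb E^{\rho,\tau}_v(\mathrm{TP})$. A path conforms to a memoryless deterministic Min strategy $\sigma_1$ if each Min vertex $u$ on it (except possibly the last) is followed by $\sigma_1(u)$. An NC-strategy is a memoryless deterministic Min strategy all of whose conforming cycles have negative total weight; it is fake-optimal if for all $v$, every finite play from $v$ ending in $T$ conforming to it has total payoff at most $\mathrm{Val}^{\mathrm d}(v)$. An attractor strategy is a memoryless deterministic Min strategy guaranteeing that every conforming play reaches $T$. The strategy $\rho_p$: for $v\in V_{\mathrm{Min}}$, if the strongly connected component of $v$ in $(V,E)$ contains no negative-weight cycle, $\rho_p(v)$ is the Dirac distribution on $\sigma_1(v)$; otherwise, if $\sigma_1(v)\ne\sigma_2(v)$, $\rho_p(v)$ chooses $\sigma_1(v)$ with probability $p$ and $\sigma_2(v)$ with probability $1-p$, and if $\sigma_1(v)=\sigma_2(v)$ it chooses it with probability 1. *)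

From HB Require Import structures.
From mathcomp Require Import all_boot all_order all_algebra.
From mathcomp Require Import boolp classical_sets reals ereal topology normedtype sequences.
From mathcomp Require Import Rstruct Rstruct_topology.
From Stdlib Require Import Reals.
Set Implicit Arguments. Unset Strict Implicit. Unset Printing Implicit Defensive.
Import Order.TTheory GRing.Theory Num.Theory.
Local Open Scope ring_scope.

(* Owners of vertices: V = V_Max ⊎ V_Min ⊎ T. *)
Inductive player := PMax | PMin | PTgt.
Definition player_eqb (a b : player) : bool :=
  match a, b with PMax, PMax | PMin, PMin | PTgt, PTgt => true | _, _ => false end.
Lemma player_eqP : Equality.axiom player_eqb.
Proof. by case; case; constructor. Qed.
HB.instance Definition _ := hasDecEq.Build player player_eqP.

Section Game.
Variables (V : finType) (own : V -> player) (E : rel V) (w : V -> V -> int).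

Definition wf_game : Prop :=
  (forall u v, E u v -> own u <> PTgt) /\
  (forall u, own u <> PTgt -> exists v, E u v).

Definition pathw (x : V) (p : seq V) : int :=
  \sum_(e <- zip (x :: p) p) w e.1 e.2.

Definition cycle_weight (c : seq V) : int :=
  if c is x :: p then pathw x (rcons p x) else 0.

Definition cycle_edges (c : seq V) : seq (V * V) := zip c (rot 1 c).

(* A deterministic strategy maps a finite path (prefix h, current vertex u)
   to a successor of u; only its values at the owner's vertices matter. *)
Definition det_strategy := seq V -> V -> V.
Definition valid_det (pl : player) (s : det_strategy) : Prop :=
  forall h u, own u = pl -> E u (s h u).

Definition step (s t : det_strategy) (h : seq V) (u : V) : V :=
  match own u with PMin => s h u | PMax => t h u | PTgt => u end.

(* the first n+1 vertices of the unique play from v conforming to (s,t),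
   as (prefix, current vertex) *)
Fixpoint ppath (s t : det_strategy) (v : V) (n : nat) : seq V * V :=
  match n with
  | 0 => ([::], v)
  | n'.+1 => let: (h, u) := ppath s t v n' in (rcons h u, step s t h u)
  end.

Definition play s t v n : V := (ppath s t v n).2.

Definition TP (s t : det_strategy) (v : V) : \bar R :=
  match pselect (exists n, own (play s t v n) == PTgt) with
  | left H => ((\sum_(i < ex_minn H) w (play s t v i) (play s t v i.+1))%:~R)%:E
  | right _ => +oo%E
  end.

Definition Val_sigma (s : det_strategy) (v : V) : \bar R :=
  ereal_sup [set TP s t v | t in [set t | valid_det PMax t]].

Definition Val_d (v : V) : \bar R :=
  ereal_inf [set Val_sigma s v | s in [set s | valid_det PMin s]].

Definition mless_strategy := V -> V -> R.   (* u |-> distribution on successors *)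
Definition valid_mless (pl : player) (r : mless_strategy) : Prop :=
  forall u, own u = pl ->
    (forall v, 0 <= r u v) /\ (forall v, 0 < r u v -> E u v) /\
    \sum_(v : V) r u v = 1.

(* transition probabilities of the Markov chain G^{rho,tau}; target vertices
   have no outgoing transitions (E has no edges out of T) *)
Definition chain (rho tau : mless_strategy) (u v : V) : R :=
  match own u with PMin => rho u v | PMax => tau u v | PTgt => 0 end.

Fixpoint reachP (rho tau : mless_strategy) (n : nat) (u : V) : R :=
  match n with
  | 0 => if own u == PTgt then 1 else 0
  | n'.+1 => if own u == PTgt then 1
             else \sum_(v : V) chain rho tau u v * reachP rho tau n' v
  end.

(* sum, over the paths from u first reaching T within n steps, of
   probability * total weight *)
Fixpoint expW (rho tau : mless_strategy) (n : nat) (u : V) : R :=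
  match n with
  | 0 => 0
  | n'.+1 => if own u == PTgt then 0
             else \sum_(v : V) chain rho tau u v *
                    ((w u v)%:~R * reachP rho tau n' v + expW rho tau n' v)
  end.

(* expected total payoff E^{rho,tau}_u(TP): +oo if T is missed with positive
   probability, otherwise the (absolutely convergent) expectation over the
   finite plays *)
Definition ETP (rho tau : mless_strategy) (u : V) : \bar R :=
  if limn (fun n => reachP rho tau n u) == 1 then (limn (fun n => expW rho tau n u))%:E
  else +oo%E.

Definition Val_m_bar (v : V) : \bar R :=
  ereal_inf [set ereal_sup [set ETP rho tau v | tau in [set tau | valid_mless PMax tau]]
            | rho in [set rho | valid_mless PMin rho]].

Definition valid_md (s : V -> V) : Prop := forall u, own u = PMin -> E u (s u).

Definition conf_step (s : V -> V) : rel V :=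
  fun a b => E a b && ((own a == PMin) ==> (b == s a)).

Definition NC_strategy (s : V -> V) : Prop :=
  valid_md s /\
  forall c : seq V, c != [::] -> cycle (conf_step s) c -> cycle_weight c < 0.

Definition fake_optimal (s : V -> V) : Prop :=
  forall (v : V) (p : seq V),
    path (conf_step s) v p -> own (last v p) = PTgt ->
    all (fun x => own x != PTgt) (belast v p) ->
    (((pathw v p)%:~R : R)%:E <= Val_d v)%E.

Definition attractor (s : V -> V) : Prop :=
  valid_md s /\
  forall f : nat -> V,
    (forall n, own (f n) <> PTgt -> conf_step s (f n) (f n.+1)) ->
    exists n, own (f n) = PTgt.

Definition negSCC (v : V) : Prop :=
  exists c : seq V, [/\ c != [::], cycle E c, cycle_weight c < 0 &
    all (fun x => connect E v x && connect E x v) c].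

Definition rho_p (s1 s2 : V -> V) (p : R) : mless_strategy :=
  fun u v =>
    if `[< negSCC u >] && (s1 u != s2 u) then
      (if v == s1 u then p else if v == s2 u then 1 - p else 0)
    else (v == s1 u)%:R.

Definition det_mless (t : V -> V) : mless_strategy := fun u v => (v == t u)%:R.

End Game.

From HB Require Import structures.
From mathcomp Require Import all_boot all_order all_algebra.
From mathcomp Require Import boolp classical_sets reals ereal topology normedtype sequences.
From mathcomp Require Import Rstruct Rstruct_topology.
From Stdlib Require Import Reals.
Set Implicit Arguments. Unset Strict Implicit. Unset Printing Implicit Defensive.
Import Order.TTheory GRing.Theory Num.Theory.
Local Open Scope ring_scope.

(* A transition of positive probability in G^{rho_p,tau} either follows
   sigma_1 (or tau, at a Max vertex), or is one of the switches to sigma_2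
   taken with probability 1 - p.  A cycle avoiding the switches therefore
   conforms to the NC-strategy sigma_1, so its weight is negative. *)

Lemma path_edgesE (T : Type) (r : rel T) (x : T) (s : seq T) :
  path r x s = all (fun e => r e.1 e.2) (zip (belast x s) s).
Proof. by elim: s x => //= y s IH x; rewrite IH. Qed.

Lemma cycle_edgesE (T : finType) (r : rel T) (c : seq T) :
  cycle r c = all (fun e => r e.1 e.2) (cycle_edges c).
Proof.
by case: c => // x q; rewrite /= path_edgesE belast_rcons /cycle_edges rot1_cons.
Qed.

Lemma natr_eq_gt0 (R : numDomainType) (T : eqType) (x y : T) :
  0 < (x == y)%:R :> R -> x = y.
Proof. by rewrite ltr0n lt0b => /eqP. Qed.

Section RhoPTransitions.
Variables (V : finType) (own : V -> player) (E : rel V) (w : V -> V -> int).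
Variables (s1 s2 : V -> V) (p : R) (tau : V -> V).
Hypothesis s1_valid : valid_md own E s1.
Hypothesis tau_valid : forall u, own u = PMax -> E u (tau u).

Definition switch_move (a b : V) : Prop :=
  [/\ own a = PMin, b = s2 a, negSCC E w a & s1 a != s2 a].

Lemma chain_rho_p_gt0 (a b : V) :
  0 < chain own (rho_p E w s1 s2 p) (det_mless tau) a b ->
  conf_step own E s1 a b \/ switch_move a b.
Proof.
rewrite /chain /rho_p /det_mless.
case own_a: (own a); last by rewrite ltxx.
  by move=> /natr_eq_gt0 ->; left; rewrite /conf_step tau_valid // own_a.
have s1_move : b = s1 a -> conf_step own E s1 a b.
  by move=> ->; rewrite /conf_step s1_valid ?eqxx ?implybT.
case: asboolP => [neg_a|_] /=; last by move=> /natr_eq_gt0 /s1_move; left.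
have [_ /natr_eq_gt0 /s1_move|s1_neq_s2] := eqVneq (s1 a) (s2 a); first by left.
have [/s1_move|_] := eqVneq b (s1 a); first by left.
have [b_s2|_] := eqVneq b (s2 a); first by right.
by rewrite ltxx.
Qed.

End RhoPTransitions.

Theorem lemma14 (V : finType) (own : V -> player) (E : rel V) (w : V -> V -> int)
  (Hwf : wf_game own E)
  (Hd : forall v, Val_d own E w v <> (+oo)%E)
  (Hm : forall v, Val_m_bar own E w v <> (+oo)%E)
  (s1 s2 : V -> V) (p : R) (tau : V -> V)
  (H1 : NC_strategy own E w s1) (H1f : fake_optimal own E w s1)
  (H2 : attractor own E s2)
  (Hp : 0 < p < 1)
  (Htau : forall u, own u = PMax -> E u (tau u))
  (c : seq V)
  (Hc : c != [::])
  (Hcyc : cycle (fun a b => 0 < chain own (rho_p E w s1 s2 p) (det_mless tau) a b) c)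
  (Hnn : 0 <= cycle_weight w c) :
  exists2 e, e \in cycle_edges c &
    [/\ own e.1 = PMin, e.2 = s2 e.1, negSCC E w e.1 & s1 e.1 != s2 e.1].
Proof.
apply: contrapT => no_switch.
have [s1_valid s1_NC] := H1.
have c_conf : cycle (conf_step own E s1) c.
  move: Hcyc; rewrite !cycle_edgesE => /allP pos; apply/allP => e e_in.
  have [//|switch] := chain_rho_p_gt0 s1_valid Htau (pos e e_in).
  by case: no_switch; exists e.
by have := s1_NC c Hc c_conf; rewrite ltNge Hnn.
Qed.
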